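(* Let $p \geq 3$ be a prime and $x, y \in \mathbb{Z}$ with $x^2 - 2 = y^p$ and $y \neq -1$. Then $x$ and $y$ are both odd, $y \equiv 7 \pmod 8$, and every prime dividing $y$ is $\equiv \pm 1 \pmod 8$. *)

From Stdlib Require Export ZArith Znumtheory.

From Stdlib Require Import ZArith Znumtheory Lia.
From mathcomp Require Import ssreflect ssrfun ssrbool.
From mathcomp Require all_boot all_algebra all_field zify.

(* Parity: [x ^ 2 - 2] and [y ^ p] have the parities of [x] and [y], and if both
   were even then [x ^ 2 - 2 = 2 (mod 4)] while [4] divides [y ^ p].  For odd [x]
   and [y], [x ^ 2 = 1 (mod 8)] and [y ^ p = y (mod 8)] as [p] is odd, whence
   [y = 7 (mod 8)].  A prime [q] dividing [y] divides [x ^ 2 - 2], so [2] is a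
   square modulo the odd prime [q], and the second supplement to quadratic
   reciprocity gives [q = +-1 (mod 8)].  The supplement follows from Gauss's
   lemma: with [m = (q - 1) / 2], replacing each even [2k > m] by [q - 2k] shows
   [2 ^ m * m! = (-1) ^ (m - m / 2) * m!] in [F_q], while [2 ^ m = 1] by Euler's
   criterion, so [m - m / 2] is even. *)

Open Scope Z_scope.

Lemma Zprime_odd p : prime p -> 3 <= p -> Z.odd p.
Proof.
move=> p_pr p_ge3; case: (Z.odd p) (Z.div2_odd p) => // def_p.
have two_dvd_p : (2 | p) by exists (Z.div2 p); lia.
by have := prime_div_prime 2 p prime_2 p_pr two_dvd_p; lia.
Qed.

Lemma Zodd_divide d n : (d | n) -> Z.odd n -> Z.odd d.
Proof. by case=> c ->; rewrite Z.odd_mul => /andP[]. Qed.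

Lemma Zdivide_pow a n : 0 < n -> (a | a ^ n).
Proof.
move=> n_gt0; rewrite (_ : n = Z.succ (n - 1)); last by lia.
by rewrite Z.pow_succ_r; [apply: Z.divide_factor_l | lia].
Qed.

Lemma Zodd_sqr_mod8 x : Z.odd x -> x ^ 2 mod 8 = 1.
Proof.
move/Z.odd_spec=> [k ->]; case: (Z.Even_or_Odd k) => [[j ->] | [j ->]];
  Z.div_mod_to_equations; lia.
Qed.

Lemma Zodd_pow_mod8 y n : Z.odd y -> Z.odd n -> 0 <= n -> y ^ n mod 8 = y mod 8.
Proof.
move=> y_odd /Z.odd_spec[k def_n] n_ge0.
have -> : y ^ n = y * (y ^ 2) ^ k.
  by rewrite -Z.pow_mul_r -?Z.pow_succ_r ?def_n //; lia.
by rewrite Z.mul_mod // -Z.mod_pow_l Zodd_sqr_mod8 // Z.pow_1_l ?Z.mul_1_r ?Z.mod_mod //; lia.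
Qed.

Lemma sqr_sub2_eq_pow_odd x y n : 2 <= n -> x ^ 2 - 2 = y ^ n -> Z.odd x /\ Z.odd y.
Proof.
move=> n_ge2 eq_xy.
have same_parity : Z.odd x = Z.odd y.
  by have := congr1 Z.odd eq_xy; rewrite Z.odd_sub !Z.odd_pow ?Bool.xorb_false_r //; lia.
rewrite -same_parity; case: (boolP (Z.odd x)) => [// | x_even].
move: (x_even); rewrite same_parity !Z.negb_odd => /Z.even_spec[b def_y].
move: x_even; rewrite Z.negb_odd => /Z.even_spec[a def_x].
have y_pow : y ^ n = y ^ 2 * y ^ (n - 2) by rewrite -Z.pow_add_r ?Zplus_minus //; lia.
by move: eq_xy; rewrite y_pow def_x def_y !Z.pow_mul_l; lia.
Qed.

Lemma sqr_sub2_eq_pow_mod8 x y n : Z.odd x -> Z.odd y -> Z.odd n -> 0 <= n ->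
  x ^ 2 - 2 = y ^ n -> y mod 8 = 7.
Proof.
move=> x_odd y_odd n_odd n_ge0 eq_xy.
rewrite -(Zodd_pow_mod8 y n y_odd n_odd n_ge0) -eq_xy.
by have := Zodd_sqr_mod8 x x_odd; Z.div_mod_to_equations; lia.
Qed.

Module SecondSupplement.
Import all_boot all_algebra all_field zify GRing.Theory.
Local Open Scope nat_scope.

Lemma fact_evens_odds n :
  n`! = (\prod_(0 <= k < n./2) (k.*2 + 2)) * \prod_(0 <= k < n - n./2) k.*2.+1.
Proof.
elim: n => [|n IHn]; first by rewrite !big_geq.
rewrite factS IHn; have [n_odd | n_even] := boolP (odd n).
- have -> : n.+1./2 = (n./2).+1 by lia.
  have -> : n.+1 - (n./2).+1 = n - n./2 by lia.
  have -> : n.+1 = (n./2).*2 + 2 by lia.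
  rewrite big_nat_recr //=; lia.
- have -> : n.+1./2 = n./2 by lia.
  have -> : n.+1 - n./2 = (n - n./2).+1 by lia.
  have -> : n.+1 = (n - n./2).*2.+1 by lia.
  rewrite [in RHS]big_nat_recr //=; lia.
Qed.

Lemma expn2_fact n : 2 ^ n * n`! = \prod_(0 <= k < n) (k.*2 + 2).
Proof.
elim: n => [|n IHn]; first by rewrite big_geq.
by rewrite big_nat_recr //= -IHn factS expnS; lia.
Qed.

Lemma prime_ndvd_fact p n : prime p -> n < p -> ~~ (p %| n`!).
Proof.
move=> p_pr; elim: n => [|n IHn] lt_np; first by rewrite fact0 gtnNdvd ?prime_gt1.
by rewrite factS Euclid_dvdM // negb_or IHn 1?ltnW // gtnNdvd.
Qed.

Local Set Implicit Arguments.
Local Unset Strict Implicit.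

Section PrimeField.

Variable p : nat.
Hypotheses (p_pr : prime p) (p_odd : odd p).
Local Notation m := p./2.
Local Open Scope ring_scope.

Lemma Fp_prod_evens_reflect t : (t <= m)%N ->
  \prod_(t <= k < m) ((k.*2 + 2)%:R : 'F_p)
    = (-1) ^+ (m - t) * \prod_(0 <= k < m - t) (k.*2.+1)%:R.
Proof.
move=> le_tm; rewrite -{1}[t]add0n big_addn big_nat_rev /=.
transitivity (\prod_(0 <= k < m - t) (-1 * (k.*2.+1)%:R : 'F_p)).
  apply: eq_big_nat => k /andP[_ lt_k]; rewrite add0n mulN1r.
  have -> : ((m - t - k.+1 + t).*2 + 2 = p - k.*2.+1)%N by lia.
  by rewrite natrB ?pchar_Fp_0 ?sub0r //; lia.
by rewrite big_split prodr_const_nat subn0.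
Qed.

Lemma Fp_two_expr_half : (2%:R : 'F_p) ^+ m = (-1) ^+ (m - m./2).
Proof.
have fact_neq0 : (m`!%:R : 'F_p) != 0.
  by rewrite -(dvdn_pcharf (pchar_Fp p_pr)) prime_ndvd_fact //; lia.
apply: (mulIf fact_neq0).
rewrite -natrX -natrM expn2_fact (big_cat_nat _ (n := m./2)) //=; last lia.
rewrite natrM [X in _ * X]natr_prod Fp_prod_evens_reflect; last lia.
by rewrite mulrCA -natr_prod -natrM -fact_evens_odds.
Qed.

Lemma Fp_sqr_expr_half (a : 'F_p) : a != 0 -> (a ^+ 2) ^+ m = 1.
Proof.
move=> a_neq0; apply: (mulIf a_neq0); rewrite mul1r -exprM -exprSr.
by rewrite (_ : (2 * m).+1 = #|'F_p|) ?expf_card // card_Fp //; lia.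
Qed.

Lemma Fp_two_neq0 : (2%:R : 'F_p) != 0.
Proof.
rewrite -(dvdn_pcharf (pchar_Fp p_pr)) gtnNdvd //.
by have := prime_gt1 p_pr; lia.
Qed.

Lemma Fp_sqrt2_mod8 (a : 'F_p) : a ^+ 2 = 2%:R -> (p %% 8 = 1 \/ p %% 8 = 7)%N.
Proof.
move=> sqr_a.
have a_neq0 : a != 0 by apply: contra_neq Fp_two_neq0 => a0; rewrite -sqr_a a0 expr0n.
have : (-1) ^+ (m - m./2) = 1 :> 'F_p by rewrite -Fp_two_expr_half -sqr_a Fp_sqr_expr_half.
have [odd_e | even_e] := boolP (odd (m - m./2)); last by lia.
rewrite -signr_odd odd_e expr1 => /eqP.
by rewrite -subr_eq0 -opprD oppr_eq0 -mulr2n (negPf Fp_two_neq0).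
Qed.

End PrimeField.

Local Open Scope Z_scope.

Lemma prime_Z_to_nat (q : Z) : Znumtheory.prime q -> prime (Z.to_nat q).
Proof.
move=> q_pr; have q_ge2 := prime_ge_2 q q_pr.
apply/primeP; split=> [|d /dvdnP[c def_q]]; first by lia.
have d_dvd_q : (Z.of_nat d | q) by exists (Z.of_nat c); lia.
by case: (prime_divisors q q_pr _ d_dvd_q) => [|[|[|]]]; lia.
Qed.

Lemma Zprime_sqrt2_mod8 (q x : Z) : Znumtheory.prime q -> Z.odd q ->
  (q | x ^ 2 - 2) -> q mod 8 = 1 \/ q mod 8 = 7.
Proof.
move=> q_pr /Z.odd_spec[k def_q] [c sqr_x]; have q_ge2 := prime_ge_2 q q_pr.
have q_odd : odd (Z.to_nat q) by lia.
have c_ge0 : 0 <= c by nia.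
have sqr_abs_x : (Z.abs_nat x ^ 2 = 2 + Z.to_nat c * Z.to_nat q)%N by nia.
have sqrt2 : ((Z.abs_nat x)%:R ^+ 2 = 2%:R :> 'F_(Z.to_nat q))%R.
  by rewrite -natrX sqr_abs_x natrD natrM pchar_Fp_0 ?prime_Z_to_nat // mulr0 addr0.
have := Fp_sqrt2_mod8 (prime_Z_to_nat q_pr) q_odd sqrt2.
by Z.div_mod_to_equations; lia.
Qed.

End SecondSupplement.

Theorem theorem2p2 (p : Z) (x y : Z) :
  prime p -> 3 <= p ->
  x ^ 2 - 2 = y ^ p -> y <> -1 ->
  Z.Odd x /\ Z.Odd y /\ y mod 8 = 7 /\
  (forall q : Z, prime q -> (q | y) -> q mod 8 = 1 \/ q mod 8 = 7).
Proof.
move=> p_pr p_ge3 eq_xy _.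
have p_odd := Zprime_odd p p_pr p_ge3.
have [x_odd y_odd] := sqr_sub2_eq_pow_odd x y p ltac:(lia) eq_xy.
split; first exact/Z.odd_spec.
split; first exact/Z.odd_spec.
split; first by apply: (sqr_sub2_eq_pow_mod8 x y p) => //; lia.
move=> q q_pr q_dvd_y; apply: (SecondSupplement.Zprime_sqrt2_mod8 (x := x) q_pr).
  exact: Zodd_divide q_dvd_y y_odd.
by rewrite eq_xy; apply: Z.divide_trans q_dvd_y (Zdivide_pow y p _); lia.
Qed.
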